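(* Consider the half-duplex (HD) two-stage relay selection (TRS) scheme described in the context with $K\ge1$ relays, with $\varpi=0$, thresholds $\gamma_{th_j}=2^{2R_{D_j}}-1$ for $j=1,2$, and power coefficients satisfying $0<a_1<a_2$, $a_1+a_2=1$, $a_2>a_1\gamma_{th_2}$. Then its diversity order equals the number of relays: $$-\lim_{\rho\to\infty}\frac{\log P_{TRS}^{HD}(\rho)}{\log\rho}=K .$$
   Context: Network model. A base station (BS) is at the origin of the plane. There are $K\ge 1$ relays $R_1,\dots,R_K$ whose positions are i.i.d. uniformly distributed in the disc of radius $R_{\mathcal D}>0$ centred at the origin; $d_{SR_i}$ is the distance from the BS to $R_i$. Two users $D_1,D_2$ are at fixed points of the plane at distances $d_1,d_2>0$ from the BS, and $d_{R_iD_j}$ is the Euclidean distance between $R_i$ and $D_j$. Let $\alpha>0$ be the path loss exponent. The random variables $g_{SR_i}$, $g_{R_iD_1}$, $g_{R_iD_2}$ ($i=1,\dots,K$) are exponentially distributed with mean $1$ (squared magnitudes of $\mathcal{CN}(0,1)$ Rayleigh coefficients), $Z_i$ is exponentially distributed with mean $\Omega_{LI}>0$, and all of these are mutually independent and independent of the relay positions. Put $X_i=g_{SR_i}/(1+d_{SR_i}^\alpha)$ and $Y_{ji}=g_{R_iD_j}/(1+d_{R_iD_j}^\alpha)$. Let $\rho>0$ be the transmit SNR, $a_1,a_2$ power allocation coefficients, and $\varpi\in\{0,1\}$ the duplex factor. Define $\gamma_{D_2\to R_i}=\frac{\rho X_i a_2}{\rho X_i a_1+\rho\varpi Z_i+1}$,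 $\gamma_{D_1\to R_i}=\frac{\rho X_i a_1}{\rho\varpi Z_i+1}$, $\gamma^{(i)}_{D_2\to D_1}=\frac{\rho Y_{1i}a_2}{\rho Y_{1i}a_1+1}$, $\gamma^{(i)}_{D_1}=\rho Y_{1i}a_1$, $\gamma^{(i)}_{D_2}=\frac{\rho Y_{2i}a_2}{\rho Y_{2i}a_1+1}$. Target rates $R_{D_1},R_{D_2}>0$ are given; in HD mode $\varpi=0$ and $\gamma_{th_j}=2^{2R_{D_j}}-1$. TRS scheme: let $S=\{i: \gamma_{D_2\to R_i}\ge\gamma_{th_2},\ \gamma^{(i)}_{D_2\to D_1}\ge\gamma_{th_2},\ \gamma^{(i)}_{D_2}\ge\gamma_{th_2}\}$. The outage event is that either $S=\emptyset$, or $S\neq\emptyset$ and $\max_{i\in S}\min\{\gamma_{D_1\to R_i},\gamma^{(i)}_{D_1}\}<\gamma_{th_1}$; $P_{TRS}(\rho)$ is its probability, and $P_{TRS}^{HD}$ denotes it in HD mode. *)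

From HB Require Import structures.
From mathcomp Require Import all_boot all_order all_algebra.
From mathcomp Require Import all_classical all_reals all_analysis.
Set Implicit Arguments. Unset Strict Implicit. Unset Printing Implicit Defensive.
Import Order.TTheory GRing.Theory Num.Theory.
Import numFieldNormedType.Exports.
Local Open Scope classical_set_scope.
Local Open Scope ring_scope.

Definition preimg_class d d' (T : measurableType d) (S : measurableType d')
  (X : T -> S) : set (set T) :=
  [set E | exists B, measurable B /\ E = X @^-1` B].

Definition mutual_indep d (T : measurableType d) (R : realType)
  (P : probability T R) (I : eqType) (F : I -> set (set T)) : Prop :=
  forall (J : seq I) (A : I -> set T), uniq J ->
    (forall j, j \in J -> F j (A j)) ->
    P (\bigcap_(j in [set` J]) A j) = (\prod_(j <- J) P (A j))%E.

(** Exponential distribution with mean [m] (rate 1/m). *)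
Definition exp_distributed d (T : measurableType d) (R : realType)
  (P : probability T R) (X : T -> R) (m : R) : Prop :=
  measurable_fun setT X /\
  forall B : set R, measurable B -> P (X @^-1` B) = exponential_prob m^-1 B.

Definition disc (R : realType) (r : R) : set (R * R) :=
  [set p | p.1 ^+ 2 + p.2 ^+ 2 <= r ^+ 2].

Definition unif_disc_distributed d (T : measurableType d) (R : realType)
  (P : probability T R) (Q : T -> R * R) (r : R) : Prop :=
  measurable_fun setT Q /\
  forall B : set (R * R), measurable B ->
    P (Q @^-1` B) =
    ((@lebesgue_measure R \x @lebesgue_measure R) (B `&` disc r)
      * ((pi * r ^+ 2)^-1)%:E)%E.

Definition dist2 (R : realType) (p q : R * R) : R :=
  Num.sqrt ((p.1 - q.1) ^+ 2 + (p.2 - q.2) ^+ 2).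

Definition pathloss (R : realType) (alpha dd : R) : R := 1 + dd `^ alpha.

Section SINR.
Variables (R : realType) (rho a1 a2 varpi : R).
Definition gam_D2_R (X Z : R) : R := rho * X * a2 / (rho * X * a1 + rho * varpi * Z + 1).
Definition gam_D1_R (X Z : R) : R := rho * X * a1 / (rho * varpi * Z + 1).
Definition gam_D2_D1 (Y1 : R) : R := rho * Y1 * a2 / (rho * Y1 * a1 + 1).
Definition gam_D1 (Y1 : R) : R := rho * Y1 * a1.
Definition gam_D2 (Y2 : R) : R := rho * Y2 * a2 / (rho * Y2 * a1 + 1).
End SINR.

Definition trs_outage (R : realType) (K : nat) (rho a1 a2 varpi th1 th2 : R)
  (X Y1 Y2 Z : 'I_K -> R) : bool :=
  let S := [set i : 'I_K | [&& th2 <= gam_D2_R rho a1 a2 varpi (X i) (Z i),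
                               th2 <= gam_D2_D1 rho a1 a2 (Y1 i)
                             & th2 <= gam_D2 rho a1 a2 (Y2 i)]] in
  (S == set0) ||
  ((S != set0) &&
   (\big[Order.max/0]_(i in S)
       Order.min (gam_D1_R rho a1 varpi (X i) (Z i)) (gam_D1 rho a1 (Y1 i))
     < th1)).

Definition hd_threshold (R : realType) (rate : R) : R := 2 `^ (2 * rate) - 1.

(** Outage probability of TRS (as a real number) for the given random
    elements: positions Q, small-scale gains gSR, gRD1, gRD2 and loop
    interference Z, user positions D1 D2. *)
Definition P_TRS d (T : measurableType d) (R : realType) (P : probability T R)
  (K : nat) (alpha a1 a2 varpi th1 th2 : R) (D1 D2 : R * R)
  (Q : 'I_K -> T -> R * R) (gSR gRD1 gRD2 Z : 'I_K -> T -> R) (rho : R) : R :=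
  fine (P [set w | trs_outage rho a1 a2 varpi th1 th2
     (fun i => gSR i w / pathloss alpha (dist2 (Q i w) (0, 0)))
     (fun i => gRD1 i w / pathloss alpha (dist2 (Q i w) D1))
     (fun i => gRD2 i w / pathloss alpha (dist2 (Q i w) D2))
     (fun i => Z i w)]).

Definition relay_family d (T : measurableType d) (K : nat)
  (R : realType) (Q : 'I_K -> T -> R * R) (gSR gRD1 gRD2 Z : 'I_K -> T -> R)
  (ik : 'I_K * 'I_5) : set (set T) :=
  match nat_of_ord ik.2 with
  | 0 => preimg_class (Q ik.1)
  | 1 => preimg_class (gSR ik.1)
  | 2 => preimg_class (gRD1 ik.1)
  | 3 => preimg_class (gRD2 ik.1)
  | _ => preimg_class (Z ik.1)
  end.

From HB Require Import structures.
From mathcomp Require Import all_boot all_order all_algebra.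
From mathcomp Require Import all_classical all_reals all_analysis.
From mathcomp Require Import ring lra measurable_realfun.
Import Order.TTheory GRing.Theory Num.Theory.
Import numFieldNormedType.Exports.
Set Implicit Arguments. Unset Strict Implicit. Unset Printing Implicit Defensive.
Local Open Scope classical_set_scope.
Local Open Scope ring_scope.

(* In half-duplex mode a relay serves both users as soon as each of its three
   links has SNR [rho * g / (1 + d ^ alpha)] above a fixed floor.  Relays lie in
   a disc, so path losses are bounded and this holds once the gains gSR, gRD1,
   gRD2 of the relay are all at least [c / rho].  An outage therefore forces on
   every relay a deficit of probability O(1 / rho): the relay lies outside the
   disc, or one of its gains is below [c / rho].  Independence and a union
   bound over the choices of one deficit per relay give P_out = O(rho ^- K).
   Conversely, if every gSR_i is below [c' / rho] no relay decodes the message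
   of D1, an event of probability at least [(c' / (e rho)) ^ K].  Squeezed
   between two multiples of [rho ^- K], [- ln P_out / ln rho] tends to K. *)

Lemma ln_power_sandwich (R : realType) (K : nat) (cL cU rho p : R) :
  0 < cL -> 1 < rho -> cL / rho ^+ K <= p <= cU / rho ^+ K ->
  `|ln p + ln rho *+ K| <= `|ln cL| + `|ln cU|.
Proof.
move=> cL0 rho1 /andP[hL hU].
have rK : 0 < rho ^+ K by rewrite exprn_gt0 // (lt_trans ltr01).
have pL : 0 < cL / rho ^+ K by rewrite divr_gt0.
have cU0 : 0 < cU.
  by move: (le_trans hL hU); rewrite ler_pM2r ?invr_gt0 // => /(lt_le_trans cL0).
have pU : 0 < cU / rho ^+ K by rewrite divr_gt0.
have p0 : 0 < p by rewrite (lt_le_trans pL).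
have lnL : ln cL - ln rho *+ K <= ln p.
  by rewrite -lnXn ?(lt_trans ltr01) // -ln_div ?posrE // ler_ln ?posrE.
have lnU : ln p <= ln cU - ln rho *+ K.
  by rewrite -lnXn ?(lt_trans ltr01) // -ln_div ?posrE // ler_ln ?posrE.
have := ler_norm (- ln cL); rewrite normrN.
have := ler_norm (ln cU); have := normr_ge0 (ln cU); have := normr_ge0 (ln cL).
rewrite ler_norml; lra.
Qed.

Lemma cvg_decay_exponent (R : realType) (K : nat) (p : R -> R) (cL cU r0 : R) :
  0 < cL ->
  (forall rho, r0 < rho -> cL / rho ^+ K <= p rho <= cU / rho ^+ K) ->
  (- (ln (p rho) / ln rho)) @[rho --> +oo] --> (K%:R : R).
Proof.
move=> cL0 hp; apply/cvgrPdist_lt => e e0.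
set C := `|ln cL| + `|ln cU|.
exists (Num.max r0 (Num.max 1 (expR (C / e)))); split; first exact: num_real.
move=> rho; rewrite !gt_max => /andP[r0rho /andP[rho1 rhoC]].
have lnrho0 : 0 < ln rho by rewrite ln_gt0.
have lnrhoC : C / e < ln rho.
  by rewrite -[C / e]expRK ltr_ln ?posrE ?expR_gt0 // (lt_trans ltr01).
have -> : K%:R - - (ln (p rho) / ln rho) = (ln (p rho) + ln rho *+ K) / ln rho.
  by rewrite -mulr_natr; field; rewrite gt_eqF.
rewrite normrM [`|_^-1|]gtr0_norm ?invr_gt0 // ltr_pdivrMr //.
apply: (le_lt_trans (ln_power_sandwich cL0 rho1 (hp _ r0rho))).
by rewrite [e * _]mulrC -ltr_pdivrMr.
Qed.

Lemma measurable_preimage d d' (T : measurableType d) (S : measurableType d')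
  (f : T -> S) (B : set S) :
  measurable_fun setT f -> measurable B -> measurable (f @^-1` B).
Proof. by move=> mf mB; rewrite -[f @^-1` B]setTI; apply: mf. Qed.

Section exponential_tails.
Context d (T : measurableType d) (R : realType) (P : probability T R) (X : T -> R).
Hypothesis X_exp : exp_distributed P X 1.

Lemma exp1_prob_lt_le (v : R) : 0 < v -> (P (X @^-1` `]-oo, v[) <= v%:E)%E.
Proof.
move=> v0; have [mX PX] := X_exp.
have split_at0 : X @^-1` `]-oo, v[ `<=` X @^-1` `]-oo, 0[ `|` X @^-1` `[0, v].
  move=> w /=; rewrite !in_itv /= => Xv.
  by case: (ltP (X w) 0) => X0; [left | right; apply/andP; split; [|exact: ltW]].
apply: (le_trans (le_measure _ _ _ split_at0)); rewrite ?inE.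
- exact: measurable_preimage.
- by apply: measurableU; exact: measurable_preimage.
apply: (le_trans (measureU2 _ _ _)); try exact: measurable_preimage.
(* retype the interval endpoints in [R], as [PX] expects *)
change (P (X @^-1` `]-oo, 0%R[) + P (X @^-1` `[0%R, v]) <= v%:E)%E.
rewrite !PX // invr1 exponential_prob_itv0c //.
have -> : exponential_prob 1 `]-oo, 0[ = 0%E :> \bar R.
  apply: integral0_eq => x; rewrite /= in_itv /= => x0.
  by rewrite lt0_exponential_pdf.
rewrite add0e mulN1r lee_fin.
by have := expR_ge1Dx (- v); lra.
Qed.

Lemma exp1_prob_itv0c_ge (u : R) : 0 < u -> u <= 1 ->
  ((u * expR (-1))%:E <= P (X @^-1` `[0%R, u]))%E.
Proof.
move=> u0 u1; rewrite X_exp.2 // invr1 exponential_prob_itv0c // mulN1r lee_fin.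
have eu_le : expR (-1) <= expR (- u) by rewrite ler_expR lerN2.
have := expR_ge1Dx u; have := expR_gt0 u; rewrite expRN in eu_le *.
move=> eu0 eu1; apply: (le_trans (_ : _ <= u / expR u)); first by rewrite ler_pM2l.
by rewrite ler_pdivrMr // mulrBl mulVf ?gt_eqF //; lra.
Qed.

End exponential_tails.

Lemma measure_bigsetU_le d (T : measurableType d) (R : realType)
  (mu : {measure set T -> \bar R}) (I : Type) (s : seq I) (G : I -> set T) :
  (forall i, measurable (G i)) ->
  (mu (\big[setU/set0]_(i <- s) G i) <= \sum_(i <- s) mu (G i))%E.
Proof.
move=> mG; elim: s => [|i s IHs]; first by rewrite !big_nil measure0.
rewrite !big_cons; apply: le_trans (measureU2 _ _ _) _ => //.
  exact: bigsetU_measurable.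
exact: leeD.
Qed.

Section mutual_independence.
Context d (T : measurableType d) (R : realType) (P : probability T R).

Section finite_family.
Context (I : finType) (J : eqType) (F : I * J -> set (set T)).
Hypothesis F_indep : mutual_indep P F.
Variables (f : I -> J) (A : I -> set T).
Hypotheses (FA : forall i, F (i, f i) (A i)) (mA : forall i, measurable (A i)).

Lemma mutual_indep_bigcap : P (\bigcap_i A i) = (\prod_i P (A i))%E.
Proof.
have := @F_indep [seq (i, f i) | i <- enum I] (fun ik => A ik.1).
rewrite big_map big_enum /= => <-.
- congr (P _); apply/seteqP; split => w /= Aw.
  + by move=> _ /mapP[i _ ->]; exact: Aw.
  + by move=> i _; apply: (Aw (i, f i)); rewrite /= map_f // mem_enum.
- by rewrite map_inj_uniq ?enum_uniq // => i j [].
- by move=> _ /mapP[i _ ->]; exact: FA.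
Qed.

Lemma fine_mutual_indep_bigcap :
  fine (P (\bigcap_i A i)) = \prod_i fine (P (A i)).
Proof.
rewrite mutual_indep_bigcap (eq_bigr (fun i => (fine (P (A i)))%:E)).
  by rewrite prodEFin.
by move=> i _; rewrite fineK ?fin_num_measure.
Qed.

Lemma mutual_indep_bigcap_ge (c : R) : 0 <= c ->
  (forall i, (c%:E <= P (A i))%E) -> c ^+ #|I| <= fine (P (\bigcap_i A i)).
Proof.
move=> c0 cA; rewrite fine_mutual_indep_bigcap -prodr_const.
by apply: ler_prod => i _; rewrite c0 /= -lee_fin fineK ?fin_num_measure.
Qed.

Lemma mutual_indep_bigcap_le (c : R) :
  (forall i, (P (A i) <= c%:E)%E) -> fine (P (\bigcap_i A i)) <= c ^+ #|I|.
Proof.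
move=> Ac; rewrite fine_mutual_indep_bigcap -prodr_const.
apply: ler_prod => i _; rewrite fine_ge0 ?measure_ge0 //=.
by rewrite -lee_fin fineK ?fin_num_measure.
Qed.

End finite_family.

Lemma mutual_indep_cover_le (I J : finType) (F : I * J -> set (set T))
  (H : I -> J -> set T) (E : set T) (v : R) :
  mutual_indep P F -> (forall i k, F (i, k) (H i k)) ->
  (forall i k, measurable (H i k)) -> (forall i k, (P (H i k) <= v%:E)%E) ->
  measurable E -> E `<=` \bigcap_i \bigcup_k H i k ->
  fine (P E) <= (#|J| ^ #|I|)%:R * v ^+ #|I|.
Proof.
move=> F_indep FH mH PH mE EH.
pose B (f : {ffun I -> J}) := \bigcap_i H i (f i).
have mB f : measurable (B f).
  by apply: fin_bigcap_measurable => [|i _]; [exact: finite_finset | exact: mH].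
have EB : E `<=` \big[setU/set0]_(f <- enum {ffun I -> J}) B f.
  move=> w /EH Ew; have /choice[f fw] : forall i, exists k, H i k w.
    by move=> i; have [k _ ?] := Ew i Logic.I; exists k.
  rewrite -bigcup_seq; exists [ffun i => f i]; first by rewrite /= mem_enum.
  by move=> i _; rewrite ffunE.
have PB f : (P (B f) <= (v ^+ #|I|)%:E)%E.
  rewrite -(fineK (fin_num_measure P _ (mB f))) lee_fin.
  exact: (mutual_indep_bigcap_le F_indep (fun i => FH i (f i))).
rewrite -lee_fin fineK ?fin_num_measure //.
apply: (le_trans (le_measure _ _ _ EB)); rewrite ?inE //.
  exact: bigsetU_measurable.
apply: (le_trans (measure_bigsetU_le _ _ mB)).
apply: (@le_trans _ _ (\sum_(f <- enum {ffun I -> J}) (v ^+ #|I|)%:E)%E).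
  by apply: lee_sum => f _; exact: PB.
by rewrite sumEFin lee_fin big_enum sumr_const card_ffun mulr_natl.
Qed.

End mutual_independence.

Lemma measurable_inv (R : realType) : measurable_fun setT (@GRing.inv R).
Proof.
rewrite -(setUv [set (0 : R)]); apply/measurable_funU => //; first exact: measurableC.
split; first exact: measurable_fun_set1.
apply: open_continuous_measurable_fun.
  exact/closed_openC/accessible_closed_set1/hausdorff_accessible/Rhausdorff.
by move=> x; rewrite inE /= => x0; apply: inv_continuous; apply/eqP.
Qed.

Lemma measurable_fun_divr d (T : measurableType d) (R : realType) (f g : T -> R) :
  measurable_fun setT f -> measurable_fun setT g ->
  measurable_fun setT (fun w => f w / g w).
Proof.
move=> mf mg; apply: measurable_funM => //.
by apply: (measurableT_comp (f := @GRing.inv R)); first exact: measurable_inv.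
Qed.

Lemma measurable_fun_existsb d (T : measurableType d) (I : finType)
  (f : I -> T -> bool) :
  (forall i, measurable_fun setT (f i)) ->
  measurable_fun setT (fun w => [exists i, f i w]).
Proof.
move=> mf; apply: (measurable_fun_bool true); rewrite setTI.
rewrite (_ : _ @^-1` _ = \bigcup_(i in setT) f i @^-1` [set true]).
  by apply: fin_bigcup_measurable => [|i _]; [exact: finite_finset | exact: measurable_preimage].
apply/seteqP; split => [w /= /existsP[i fi] | w [i _ /= fi]]; first by exists i.
by apply/existsP; exists i.
Qed.

Section outage_event.
Context (R : realType) (rho a1 a2 varpi th1 th2 : R).

Definition relay_succeeds (x y1 y2 z : R) : bool :=
  [&& th2 <= gam_D2_R rho a1 a2 varpi x z, th2 <= gam_D2_D1 rho a1 a2 y1,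
      th2 <= gam_D2 rho a1 a2 y2, th1 <= gam_D1_R rho a1 varpi x z
    & th1 <= gam_D1 rho a1 y1].

Lemma trs_outageE (K : nat) (X Y1 Y2 Z : 'I_K -> R) : 0 < th1 ->
  trs_outage rho a1 a2 varpi th1 th2 X Y1 Y2 Z =
  ~~ [exists i, relay_succeeds (X i) (Y1 i) (Y2 i) (Z i)].
Proof.
move=> th1_gt0; rewrite /trs_outage; set S := [set i | _].
case: (boolP [exists i, _]) => [/existsP[i /and5P[h1 h2 h3 h4 h5]] | /existsPn fail] /=.
  have iS : i \in S by rewrite inE; apply/and3P.
  have -> : (S == set0) = false by apply/negbTE/negP => /eqP S0; rewrite S0 inE in iS.
  apply/negbTE; rewrite -leNgt; apply: le_trans (le_bigmax_cond _ _ iS).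
  by rewrite le_min h4 h5.
case: (S == set0) => //=.
apply/bigmax_ltP; split => // i; rewrite inE => /and3P[h1 h2 h3].
by move: (fail i); rewrite /relay_succeeds h1 h2 h3 /= negb_and -!ltNge gt_min.
Qed.

Context d (T : measurableType d) (K : nat) (X Y1 Y2 Z : 'I_K -> T -> R).
Hypotheses (mX : forall i, measurable_fun setT (X i))
  (mY1 : forall i, measurable_fun setT (Y1 i))
  (mY2 : forall i, measurable_fun setT (Y2 i))
  (mZ : forall i, measurable_fun setT (Z i)).

Lemma measurable_relay_succeeds (i : 'I_K) :
  measurable_fun setT (fun w => relay_succeeds (X i w) (Y1 i w) (Y2 i w) (Z i w)).
Proof.
rewrite /relay_succeeds /gam_D2_R /gam_D2_D1 /gam_D2 /gam_D1_R /gam_D1.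
by repeat apply: measurable_and; apply: measurable_fun_ler => //;
  repeat (apply: measurable_fun_divr || apply: measurable_funD || apply: measurable_funM).
Qed.

Lemma measurable_trs_outage : 0 < th1 ->
  measurable [set w | trs_outage rho a1 a2 varpi th1 th2
    (X ^~ w) (Y1 ^~ w) (Y2 ^~ w) (Z ^~ w)].
Proof.
move=> th1_gt0; under eq_set do rewrite trs_outageE //.
rewrite -[X in measurable X]setTI; apply: measurable_neg => //.
  exact/measurable_fun_existsb/measurable_relay_succeeds.
Qed.

End outage_event.

Lemma hd_threshold_gt0 (R : realType) (rate : R) : 0 < rate -> 0 < hd_threshold rate.
Proof.
move=> rate_gt0; rewrite /hd_threshold subr_gt0 lt_neqAle eq_sym.
rewrite powR_eq1 negb_or negb_or gt_eqF ?ltr1n //= -leNgt ler0n gt_eqF ?mulr_gt0 //=.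
by rewrite -[X in X <= _](powRr0 (2 : R)) ler_powR ?ler1n // mulr_ge0 ?ltW.
Qed.

Section half_duplex.
Context (R : realType) (rho a1 a2 th1 th2 : R).
Hypotheses (a1_gt0 : 0 < a1) (th2_gt0 : 0 < th2) (th2_lt : a1 * th2 < a2).

Definition hd_snr_floor : R := Num.max (th2 / (a2 - a1 * th2)) (th1 / a1).

Lemma th2_le_sinr (t : R) : hd_snr_floor <= t -> th2 <= t * a2 / (t * a1 + 1).
Proof.
rewrite ge_max => /andP[+ _]; rewrite ler_pdivrMr ?subr_gt0 // => ht.
have t_gt0 : 0 < t by move: (lt_le_trans th2_gt0 ht); rewrite pmulr_lgt0 ?subr_gt0.
by rewrite ler_pdivlMr ?addr_gt0 ?mulr_gt0 //; nra.
Qed.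

Lemma th1_le_snr (t : R) : hd_snr_floor <= t -> th1 <= t * a1.
Proof. by rewrite ge_max => /andP[_]; rewrite ler_pdivrMr. Qed.

Lemma hd_relay_succeeds (x y1 y2 z : R) :
  hd_snr_floor <= rho * x -> hd_snr_floor <= rho * y1 -> hd_snr_floor <= rho * y2 ->
  relay_succeeds rho a1 a2 0 th1 th2 x y1 y2 z.
Proof.
move=> hx hy1 hy2; rewrite /relay_succeeds /gam_D2_R /gam_D2_D1 /gam_D2 /gam_D1_R /gam_D1.
by rewrite !mulr0 !mul0r addr0 add0r divr1 !th2_le_sinr ?th1_le_snr.
Qed.

Lemma hd_relay_fails (x y1 y2 z : R) :
  rho * x * a1 < th1 -> ~~ relay_succeeds rho a1 a2 0 th1 th2 x y1 y2 z.
Proof.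
move=> hx; apply/negP => /and5P[_ _ _ + _].
by rewrite /gam_D1_R mulr0 mul0r add0r divr1 leNgt hx.
Qed.

End half_duplex.

Section path_loss.
Context (R : realType) (alpha : R).

Lemma pathloss_ge1 (dd : R) : 1 <= pathloss alpha dd.
Proof. by rewrite /pathloss lerDl powR_ge0. Qed.

Lemma pathloss_disc_le (r s : R) (p c : R * R) : 0 <= alpha ->
  disc r p -> c.1 ^+ 2 + c.2 ^+ 2 <= s ->
  pathloss alpha (dist2 p c) <= 1 + Num.sqrt (2 * r ^+ 2 + 2 * s) `^ alpha.
Proof.
rewrite /disc /= => alpha_ge0 pr cs; rewrite /pathloss lerD2l.
apply: ge0_ler_powR; rewrite ?nnegrE ?sqrtr_ge0 // /dist2 ler_sqrt.
  by have := sqr_ge0 (p.1 + c.1); have := sqr_ge0 (p.2 + c.2); nra.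
by have := sqr_ge0 r; have := le_trans (addr_ge0 (sqr_ge0 c.1) (sqr_ge0 c.2)) cs; nra.
Qed.

Lemma measurable_disc (r : R) : measurable (disc r).
Proof.
rewrite (_ : disc r = (fun p : R * R => p.1 ^+ 2 + p.2 ^+ 2) @^-1` `]-oo, r ^+ 2]).
  by apply: measurable_preimage => //; apply: measurable_funD; apply: measurable_funX.
by apply/seteqP; split => p; rewrite /disc /= in_itv.
Qed.

Lemma measurable_pathloss (c : R * R) :
  measurable_fun setT (fun p : R * R => pathloss alpha (dist2 p c)).
Proof.
apply: measurable_funD => //.
apply: (measurableT_comp (f := fun x : R => x `^ alpha)); first exact: measurable_powR.
apply: (measurableT_comp (f := @Num.sqrt R)).
  by apply: continuous_measurable_fun; exact: sqrt_continuous.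
by apply: measurable_funD; apply: measurable_funX; apply: measurable_funB.
Qed.

Lemma measurable_fun_pathloss_gain d (T : measurableType d) (c : R * R)
  (Q : T -> R * R) (g : T -> R) :
  measurable_fun setT Q -> measurable_fun setT g ->
  measurable_fun setT (fun w => g w / pathloss alpha (dist2 (Q w) c)).
Proof.
move=> mQ mg; apply: measurable_fun_divr => //.
exact: measurableT_comp (measurable_pathloss c) mQ.
Qed.

End path_loss.

Section hd_outage_bounds.
Context d (T : measurableType d) (R : realType) (P : probability T R) (K : nat).
Context (RD alpha a1 a2 th1 th2 : R) (D1 D2 : R * R).
Context (Q : 'I_K -> T -> R * R) (gSR gRD1 gRD2 Z : 'I_K -> T -> R).
Hypotheses (alpha_gt0 : 0 < alpha) (a1_gt0 : 0 < a1) (th1_gt0 : 0 < th1)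
  (th2_gt0 : 0 < th2) (th2_lt : a1 * th2 < a2).
Hypotheses (Q_unif : forall i, unif_disc_distributed P (Q i) RD)
  (gSR_exp : forall i, exp_distributed P (gSR i) 1)
  (gRD1_exp : forall i, exp_distributed P (gRD1 i) 1)
  (gRD2_exp : forall i, exp_distributed P (gRD2 i) 1)
  (mZ : forall i, measurable_fun setT (Z i))
  (indep : mutual_indep P (relay_family Q gSR gRD1 gRD2 Z)).

Let channel (g : 'I_K -> T -> R) (c : R * R) (i : 'I_K) (w : T) : R :=
  g i w / pathloss alpha (dist2 (Q i w) c).

Let outage (rho : R) : set T := [set w | trs_outage rho a1 a2 0 th1 th2
  (channel gSR (0, 0) ^~ w) (channel gRD1 D1 ^~ w) (channel gRD2 D2 ^~ w) (Z ^~ w)].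

Let P_TRS_outage (rho : R) : fine (P (outage rho)) =
  P_TRS P alpha a1 a2 0 th1 th2 D1 D2 Q gSR gRD1 gRD2 Z rho.
Proof. by []. Qed.

Let measurable_outage (rho : R) : measurable (outage rho).
Proof.
apply: measurable_trs_outage => // i; apply: measurable_fun_pathloss_gain;
  by [case: (Q_unif i) | case: (gSR_exp i) | case: (gRD1_exp i) | case: (gRD2_exp i)].
Qed.

Lemma hd_outage_lower_bound (rho : R) : th1 / (2 * a1) < rho ->
  (th1 * expR (-1) / (2 * a1)) ^+ K / rho ^+ K <=
  P_TRS P alpha a1 a2 0 th1 th2 D1 D2 Q gSR gRD1 gRD2 Z rho.
Proof.
move=> rho_gt; have rho_gt0 : 0 < rho by rewrite (lt_trans _ rho_gt) ?divr_gt0 ?mulr_gt0.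
set u := th1 / (2 * a1 * rho).
have u_gt0 : 0 < u by rewrite divr_gt0 ?mulr_gt0.
have u_le1 : u <= 1.
  rewrite ler_pdivrMr ?mulr_gt0 // mul1r.
  by move: rho_gt; rewrite ltr_pdivrMr ?mulr_gt0 // mulrC => /ltW.
pose A i := gSR i @^-1` `[0%R, u].
have mA i : measurable (A i).
  by apply: measurable_preimage (measurable_itv _); case: (gSR_exp i).
have A_outage : \bigcap_i A i `<=` outage rho.
  move=> w Aw; rewrite /outage /= trs_outageE //; apply/existsPn => i.
  apply: hd_relay_fails; move: (Aw i Logic.I); rewrite /A /= in_itv /= => /andP[g_ge0 g_le].
  have PL_gt0 := lt_le_trans ltr01 (pathloss_ge1 alpha (dist2 (Q i w) (0, 0))).
  have : channel gSR (0, 0) i w <= u.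
    rewrite /channel ler_pdivrMr //; apply: (le_trans g_le).
    by rewrite ler_peMr ?pathloss_ge1 ?ltW.
  rewrite -(ler_pM2l rho_gt0) -(ler_pM2r a1_gt0) => /le_lt_trans; apply.
  have -> : rho * u * a1 = th1 / 2 by rewrite /u; field; rewrite !lt0r_neq0.
  by rewrite ltr_pdivrMr // ltr_pMr // ltr1n.
have FA i : relay_family Q gSR gRD1 gRD2 Z (i, Ordinal (isT : (1 < 5)%N)) (A i).
  by exists `[0%R, u]%classic; split.
have := mutual_indep_bigcap_ge indep FA mA (mulr_ge0 (ltW u_gt0) (expR_ge0 _))
  (fun i => exp1_prob_itv0c_ge (gSR_exp i) u_gt0 u_le1).
rewrite card_ord -P_TRS_outage -expr_div_n (_ : _ / rho = u * expR (-1)).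
  by move=> PA; apply: le_trans PA _; apply: fine_le; rewrite ?fin_num_measure ?le_measure ?inE //;
     exact: fin_bigcap_measurable.
by rewrite /u; field; rewrite !lt0r_neq0.
Qed.

Let dist_bound : R := D1.1 ^+ 2 + D1.2 ^+ 2 + (D2.1 ^+ 2 + D2.2 ^+ 2).
Let L : R := 1 + Num.sqrt (2 * RD ^+ 2 + 2 * dist_bound) `^ alpha.
Let m0 : R := hd_snr_floor a1 a2 th1 th2.

Let L_gt0 : 0 < L.
Proof. by rewrite (lt_le_trans ltr01) ?pathloss_ge1. Qed.

Let m0_gt0 : 0 < m0.
Proof. by rewrite lt_max divr_gt0 ?subr_gt0. Qed.

Let pathloss_le_L (p c : R * R) : c \in [:: (0, 0); D1; D2] -> disc RD p ->
  pathloss alpha (dist2 p c) <= L.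
Proof.
move=> cD pRD; apply: pathloss_disc_le => //; first exact: ltW.
have := sqr_ge0 D1.1; have := sqr_ge0 D1.2; have := sqr_ge0 D2.1; have := sqr_ge0 D2.2.
by rewrite /dist_bound; move: cD; rewrite !inE => /or3P[] /eqP-> /=; rewrite ?expr0n /=; lra.
Qed.

Let snr_ge_floor (rho g : R) (p c : R * R) : 0 < rho ->
  c \in [:: (0, 0); D1; D2] -> disc RD p -> L * m0 / rho <= g ->
  m0 <= rho * (g / pathloss alpha (dist2 p c)).
Proof.
move=> rho_gt0 cD pRD g_ge; have PL_le := pathloss_le_L cD pRD.
have PL_gt0 := lt_le_trans ltr01 (pathloss_ge1 alpha (dist2 p c)).
have -> : m0 = rho * (L * m0 / rho / L) by field; rewrite !lt0r_neq0.
rewrite ler_pM2l //; apply: (le_trans (_ : _ <= g / L)); first by rewrite ler_pM2r ?invr_gt0.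
have g_ge0 : 0 <= g by apply: le_trans g_ge; rewrite divr_ge0 ?mulr_ge0 ?ltW.
by rewrite ler_wpM2l // lef_pV2 ?posrE.
Qed.

(* Deficient channel of relay i, one event per kind of random element in
   relay_family. *)
Let deficit (v : R) (i : 'I_K) (k : 'I_5) : set T :=
  match nat_of_ord k with
  | 0 => Q i @^-1` ~` disc RD
  | 1 => gSR i @^-1` `]-oo, v[
  | 2 => gRD1 i @^-1` `]-oo, v[
  | 3 => gRD2 i @^-1` `]-oo, v[
  | _ => set0
  end.

Let measurable_deficit (v : R) i k : measurable (deficit v i k).
Proof.
have := measurableC (measurable_disc RD).
case: k => -[|[|[|[|k]]]] hk; rewrite /deficit //= => disc_c; apply: measurable_preimage => //;
  by [case: (Q_unif i) | case: (gSR_exp i) | case: (gRD1_exp i) | case: (gRD2_exp i)].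
Qed.

Let relay_family_deficit (v : R) i k :
  relay_family Q gSR gRD1 gRD2 Z (i, k) (deficit v i k).
Proof.
have := measurableC (measurable_disc RD).
case: k => -[|[|[|[|k]]]] hk; rewrite /deficit /relay_family /= => disc_c;
  by [exists (~` disc RD) | exists `]-oo, v[%classic | exists set0; rewrite preimage_set0].
Qed.

Let P_deficit_le (v : R) i k : 0 < v -> (P (deficit v i k) <= v%:E)%E.
Proof.
move=> v_gt0; have disc_c := measurableC (measurable_disc RD).
case: k => -[|[|[|[|k]]]] hk; rewrite /deficit /=.
- by rewrite (Q_unif i).2 // setICl measure0 mul0e lee_fin ltW.
- exact (exp1_prob_lt_le (gSR_exp i) v_gt0).
- exact (exp1_prob_lt_le (gRD1_exp i) v_gt0).
- exact (exp1_prob_lt_le (gRD2_exp i) v_gt0).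
- by rewrite (measure0 P) lee_fin ltW.
Qed.

Let outage_deficit (rho : R) : 0 < rho ->
  outage rho `<=` \bigcap_i \bigcup_k deficit (L * m0 / rho) i k.
Proof.
move=> rho_gt0 w; rewrite /outage /= trs_outageE // => /existsPn fail i _.
apply: contrapT => sound; apply: (negP (fail i)).
have no_deficit k : ~ deficit (L * m0 / rho) i k w by move=> Hk; apply: sound; exists k.
have QD : disc RD (Q i w).
  by apply: contrapT => /(no_deficit (Ordinal (isT : (0 < 5)%N))).
have gain_ge (g : 'I_K -> T -> R) (k : 'I_5) :
    deficit (L * m0 / rho) i k w = (g i w < L * m0 / rho) -> L * m0 / rho <= g i w.
  by move=> Hk; rewrite leNgt; apply/negP; rewrite -Hk; exact: no_deficit.
have gSR_ge := gain_ge gSR (Ordinal (isT : (1 < 5)%N)) erefl.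
have gRD1_ge := gain_ge gRD1 (Ordinal (isT : (2 < 5)%N)) erefl.
have gRD2_ge := gain_ge gRD2 (Ordinal (isT : (3 < 5)%N)) erefl.
by apply: (hd_relay_succeeds a1_gt0 th2_gt0 th2_lt); apply: snr_ge_floor;
  rewrite ?inE ?eqxx ?orbT.
Qed.

Lemma hd_outage_upper_bound :
  exists cU, forall rho, 0 < rho ->
  P_TRS P alpha a1 a2 0 th1 th2 D1 D2 Q gSR gRD1 gRD2 Z rho <= cU / rho ^+ K.
Proof.
exists (5 ^+ K * (L * m0) ^+ K) => rho rho_gt0.
have v_gt0 : 0 < L * m0 / rho by rewrite !divr_gt0 ?mulr_gt0.
have := mutual_indep_cover_le indep (relay_family_deficit _) (measurable_deficit _)
  (fun i k => P_deficit_le i k v_gt0) (measurable_outage rho) (outage_deficit rho_gt0).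
by rewrite -P_TRS_outage !card_ord natrX expr_div_n mulrA.
Qed.

End hd_outage_bounds.

Theorem mainTheorem4 (d : measure_display) (T : measurableType d)
  (R : realType) (P : probability T R) (K : nat) (RD alpha OmegaLI RD1 RD2 a1 a2 : R)
  (D1 D2 : R * R)
  (Q : 'I_K -> T -> R * R) (gSR gRD1 gRD2 Z : 'I_K -> T -> R) :
  (0 < K)%N -> 0 < RD -> 0 < alpha -> 0 < OmegaLI ->
  0 < dist2 D1 (0, 0) -> 0 < dist2 D2 (0, 0) ->
  0 < RD1 -> 0 < RD2 ->
  0 < a1 -> a1 < a2 -> a1 + a2 = 1 -> a2 > a1 * hd_threshold RD2 ->
  (forall i, unif_disc_distributed P (Q i) RD) ->
  (forall i, exp_distributed P (gSR i) 1) ->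
  (forall i, exp_distributed P (gRD1 i) 1) ->
  (forall i, exp_distributed P (gRD2 i) 1) ->
  (forall i, exp_distributed P (Z i) OmegaLI) ->
  mutual_indep P (relay_family Q gSR gRD1 gRD2 Z) ->
  (- (ln (P_TRS P alpha a1 a2 0 (hd_threshold RD1) (hd_threshold RD2) D1 D2
            Q gSR gRD1 gRD2 Z rho) / ln rho))
    @[rho --> +oo] --> (K%:R : R).
Proof.
move=> _ _ alpha_gt0 _ _ _ RD1_gt0 RD2_gt0 a1_gt0 _ _ th2_lt Q_unif gSR_exp gRD1_exp
  gRD2_exp Z_exp indep.
have th1_gt0 := hd_threshold_gt0 RD1_gt0.
have mZ i : measurable_fun setT (Z i) by case: (Z_exp i).
have [cU upper] := hd_outage_upper_bound D1 D2 alpha_gt0 a1_gt0 th1_gt0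
  (hd_threshold_gt0 RD2_gt0) th2_lt Q_unif gSR_exp gRD1_exp gRD2_exp mZ indep.
have r0_gt0 : 0 < hd_threshold RD1 / (2 * a1) by rewrite divr_gt0 ?mulr_gt0.
apply: (cvg_decay_exponent (cL := (hd_threshold RD1 * expR (-1) / (2 * a1)) ^+ K)
  (cU := cU) (r0 := hd_threshold RD1 / (2 * a1))).
  by rewrite exprn_gt0 // divr_gt0 ?mulr_gt0 ?expR_gt0.
move=> rho rho_gt; rewrite upper ?(lt_trans r0_gt0) // andbT.
exact: hd_outage_lower_bound Q_unif gSR_exp gRD1_exp gRD2_exp mZ indep _ rho_gt.
Qed.
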